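(* Let $0\le k\le n$. Consider $n$ men and $n$ women, and fix a set $G$ of $k$ men and $k$ women. Let $S(k,n)$ be the number of ways to choose the preference rankings of the $n-k$ men and $n-k$ women not in $G$ (each such person strictly ranking all $n$ people of the opposite gender) so that there is no pair of soulmates consisting of a man not in $G$ and a woman not in $G$. Then \[S(k,n) = \sum_{i=0}^{n-k} (-1)^{i}\binom{n-k}{i}^2 (n-1)!^{2i}\, i!\, n!^{2n-2k-2i}.\]
   Context: Each man strictly ranks the $n$ women by a bijection to $\{1,\dots,n\}$ (1 = favorite), and each woman strictly ranks the $n$ men likewise. A man and a woman are soulmates if each ranks the other first. *)

From mathcomp Require Import all_boot all_order all_algebra all_fingroup.
Set Implicit Arguments. Unset Strict Implicit. Unset Printing Implicit Defensive.

(* A ranking of the n people of the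
   opposite gender is a bijection 'I_n -> 'I_n (a permutation), where rank
   value 0 corresponds to the paper's rank 1 (favorite), value i to rank i+1. *)
Definition ranking n := {perm 'I_n}.

Definition outside n (G : {set 'I_n}) := {x : 'I_n | x \notin G}.

Definition pref_choice n (Gm Gw : {set 'I_n}) :=
  ({ffun outside Gm -> ranking n} * {ffun outside Gw -> ranking n})%type.

Definition soulmates n (Gm Gw : {set 'I_n}) (p : pref_choice Gm Gw)
  (m : outside Gm) (w : outside Gw) : bool :=
  ((p.1 m (val w) : nat) == 0%N) && ((p.2 w (val m) : nat) == 0%N).

Definition no_outside_soulmates n (Gm Gw : {set 'I_n}) (p : pref_choice Gm Gw) : bool :=
  [forall m : outside Gm, forall w : outside Gw, ~~ soulmates p m w].

(* S(k,n) for the fixed G = Gm ∪ Gw *)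
Definition S_count n (Gm Gw : {set 'I_n}) : nat :=
  #|[set p : pref_choice Gm Gw | no_outside_soulmates p]|.

From mathcomp Require Import all_boot all_order all_algebra all_fingroup.
From mathcomp Require Import ring zify.
Set Implicit Arguments.
Unset Strict Implicit.
Import GRing.Theory.
Local Open Scope ring_scope.

(* Sum over the rankings q of the outside women.  Given q, the outside men choose
   independently: man m may take any ranking whose favourite is not one of the
   a_q(m) outside women who rank m first, i.e. one of n! - a_q(m) (n-1)! rankings.
   Expanding the product over m by subsets A of men, the sum over q of
   prod_(m in A) a_q(m) counts pairs (q, h) with h : A -> women such that h(m)
   ranks m first.  Such h are injective (a ranking has one favourite), and for
   each of the N^_|A| injective h there are (n-1)!^|A| n!^(N-|A|) such q, where
   N = n - k.  Grouping the subsets by size and using N^_i = C(N,i) i! gives the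
   formula. *)

Lemma card_perm_fix (T : finType) (x : T) :
  #|[set s : {perm T} | s x == x]| = (#|T|.-1)`!.
Proof.
rewrite -(cardsC1 x) -card_perm; apply: eq_card => s; rewrite inE.
apply/eqP/subsetP => [sx z | onC].
  by rewrite !inE; apply: contraNneq => ->; rewrite sx.
by apply/eqP; apply: contraT => sx; have := onC x sx; rewrite !inE eqxx.
Qed.

Lemma card_perm_to (T : finType) (x y : T) :
  #|[set s : {perm T} | s x == y]| = (#|T|.-1)`!.
Proof.
rewrite -(card_perm_fix x) -(card_imset _ (mulIg (tperm y x))).
apply: eq_card => s; rewrite inE; apply/imsetP/eqP => [[t] | sx].
  by rewrite inE => /eqP tx ->; rewrite permM tx tpermL.
exists (s * tperm y x)%g; last by rewrite -mulgA tperm2 mulg1.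
by rewrite inE permM sx tpermR.
Qed.

Lemma sum_card_fibres (T1 T2 : finType) (R : T1 -> T2 -> bool) :
  (\sum_x #|[set y | R x y]| = \sum_y #|[set x | R x y]|)%N.
Proof.
under eq_bigr do rewrite -sum1dep_card.
under [RHS]eq_bigr do rewrite -sum1dep_card.
exact: (exchange_big_dep xpredT).
Qed.

Lemma card_set_pair (T1 T2 : finType) (P : pred (T1 * T2)) :
  #|[set p | P p]| = (\sum_y #|[set x | P (x, y)]|)%N.
Proof.
rewrite -sum_card_fibres -sum1dep_card.
under [RHS]eq_bigr do rewrite -sum1dep_card.
by rewrite pair_big_dep; apply: eq_bigl => -[].
Qed.

Lemma card_exists_unique (I T : finType) (B : {pred I}) (R : I -> T -> bool) :
  (forall x i j, R i x -> R j x -> i = j) ->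
  #|[set x | [exists i in B, R i x]]| = (\sum_(i in B) #|[set x | R i x]|)%N.
Proof.
move=> R_uniq; rewrite -sum1dep_card big_mkcond.
under [RHS]eq_bigr do rewrite -sum1dep_card.
rewrite (exchange_big_dep xpredT) //=; apply: eq_bigr => x _.
case: existsP => [[i /andP[Bi Rix]] | none].
  rewrite (big_pred1 i) // => j; apply/andP/eqP => [[_ Rjx] | ->]; last by [].
  exact: R_uniq Rjx Rix.
rewrite big_pred0 // => j; apply/andP => -[Bj Rjx].
by apply: none; exists j; apply/andP.
Qed.

Lemma card_ffun_pointwise (I T : finType) (F : I -> {set T}) :
  #|[set f : {ffun I -> T} | [forall i, f i \in F i]]| = (\prod_i #|F i|)%N.
Proof.
rewrite (eq_card (B := family F)); last first.
  by move=> f; rewrite inE; apply/forallP/familyP.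
by rewrite card_family foldrE big_image.
Qed.

Lemma sum_set_card (V : nmodType) (I : finType) (F : nat -> V) :
  \sum_(A : {set I}) F #|A| = \sum_(i < #|{: I}|.+1) F i *+ 'C(#|{: I}|, i).
Proof.
rewrite (partition_big (fun A : {set I} => inord #|A| : 'I_#|I|.+1) xpredT) //=.
apply: eq_bigr => i _; rewrite -card_draws -sumr_const.
have leA (A : {set I}) : (#|A| < #|I|.+1)%N by rewrite ltnS max_card.
apply: eq_big => [A | A /eqP <-]; rewrite ?inE.
  by rewrite -val_eqE /= inordK.
by rewrite inordK.
Qed.

Lemma prod_subr_sets (R : comRingType) (I : finType) (a b : R) (x : I -> R) :
  \prod_i (a - b * x i) =
  \sum_(A : {set I}) (- b) ^+ #|A| * a ^+ (#|I| - #|A|) * \prod_(i in A) x i.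
Proof.
under eq_bigr do rewrite addrC -mulNr.
rewrite bigA_distr; apply: eq_bigr => A _.
have cardAC : #|~: A| = (#|I| - #|A|)%N by rewrite -(cardsC A) addKn.
rewrite big_if /= big_split /= (eq_bigl [in ~: A] (fun _ => a)) => [|i];
  last by rewrite inE.
by rewrite !prodr_const cardAC mulrAC.
Qed.

Definition ranks_first n (s : ranking n) (x : 'I_n) : bool := (s x : nat) == 0%N.

Lemma ranks_first_inj n (s : ranking n) (x y : 'I_n) :
  ranks_first s x -> ranks_first s y -> x = y.
Proof.
by move=> /eqP sx /eqP sy; apply: (perm_inj (s := s)); apply: val_inj; rewrite /= sx sy.
Qed.

Lemma card_ranks_first n (x : 'I_n) :
  #|[set s : ranking n | ranks_first s x]| = (n.-1)`!.
Proof.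
case: n x => [|n] x; first by case: x.
rewrite -[in RHS](card_ord n.+1) -(card_perm_to x ord0).
by apply: eq_card => s; rewrite !inE.
Qed.

Lemma card_ffun_ranks_first n (D W : finType) (h : D -> W) (g : D -> 'I_n) :
  injective g ->
  #|[set q : {ffun W -> ranking n} | [forall x, ranks_first (q (h x)) (g x)]]| =
  if injectiveb h then ((n.-1)`! ^ #|D| * n`! ^ (#|{: W}| - #|D|))%N else 0%N.
Proof.
move=> g_inj; case: injectiveP => [h_inj | h_ninj]; last first.
  apply/eqP; rewrite cards_eq0; apply/eqP/setP => q; rewrite !inE.
  apply/negP => /forallP q_h; apply: h_ninj => x1 x2 h12.
  by apply: g_inj; apply: (ranks_first_inj (q_h x1)); rewrite h12 q_h.
pose F w := [set s : ranking n | [forall x, (h x == w) ==> ranks_first s (g x)]].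
rewrite (eq_card (B := [set q : {ffun W -> ranking n} | [forall w, q w \in F w]]))
  => [|q]; last first.
  rewrite !inE; apply/forallP/forallP => [q_h w | q_h x].
    by rewrite inE; apply/forallP => x; apply/implyP => /eqP <-.
  by have := q_h (h x); rewrite inE => /forallP/(_ x); rewrite eqxx.
rewrite card_ffun_pointwise (bigID [in codom h]) /=.
rewrite (eq_bigr (fun _ => (n.-1)`!)) => [|_ /codomP[x ->]]; last first.
  rewrite -(card_ranks_first (g x)); apply: eq_card => s; rewrite !inE.
  apply/forallP/idP => [/(_ x) | sx y]; first by rewrite eqxx.
  by apply/implyP => /eqP/h_inj ->.
rewrite [X in (_ * X)%N](eq_bigr (fun _ => n`!)) => [|w w_h]; last first.
  rewrite -[in RHS](card_Sn n); apply: eq_card => s; rewrite !inE.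
  by apply/forallP => x; apply/implyP => /eqP hx; rewrite -hx codom_f in w_h.
by rewrite !prod_nat_const -(card_codom h_inj) -(cardC (mem (codom h))) addKn.
Qed.

Lemma card_outside n (G : {set 'I_n}) : #|{: outside G}| = (n - #|G|)%N.
Proof.
have := cardsC G; rewrite card_ord card_sig => cardGC.
suff -> : #|[pred x | x \notin G]| = #|~: G| by lia.
by apply: eq_card => x; rewrite !inE.
Qed.

Section Soulmates.
Variables (n : nat) (Gm Gw : {set 'I_n}).
Local Notation M := (outside Gm).
Local Notation W := (outside Gw).

Definition admirers (q : {ffun W -> ranking n}) (m : M) : {set W} :=
  [set w | ranks_first (q w) (val m)].

Definition safe_rankings (q : {ffun W -> ranking n}) (m : M) : {set ranking n} :=
  [set s | [forall w in admirers q m, ~~ ranks_first s (val w)]].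

Lemma card_no_soulmates_given (q : {ffun W -> ranking n}) :
  #|[set f : {ffun M -> ranking n} | no_outside_soulmates ((f, q) : pref_choice Gm Gw)]| =
  (\prod_m #|safe_rankings q m|)%N.
Proof.
rewrite -card_ffun_pointwise; apply: eq_card => f; rewrite !inE.
apply: eq_forallb => m; rewrite inE; apply: eq_forallb => w.
by rewrite inE /soulmates /ranks_first /= implybE negb_and orbC.
Qed.

Lemma card_safe_rankings (q : {ffun W -> ranking n}) (m : M) :
  (#|safe_rankings q m| + #|admirers q m| * (n.-1)`!)%N = n`!.
Proof.
rewrite -(card_Sn n) -(cardsC (safe_rankings q m)); congr (_ + _)%N.
rewrite (eq_card (B := [set s | [exists w in admirers q m, ranks_first s (val w)]])).
  rewrite card_exists_unique => [|s w w']; last by move=> /ranks_first_inj/[apply]/val_inj.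
  by rewrite (eq_bigr _ (fun w _ => card_ranks_first (val w))) sum_nat_const.
by move=> s; rewrite !inE negb_forall_in; apply: eq_existsb => w; rewrite negbK.
Qed.

Lemma sum_prod_card_admirers (A : {set M}) :
  (\sum_(q : {ffun W -> ranking n}) \prod_(m in A) #|admirers q m| =
   #|{: W}| ^_ #|A| * ((n.-1)`! ^ #|A| * n`! ^ (#|{: W}| - #|A|)))%N.
Proof.
pose D := {m : M | m \in A}.
have card_D : #|{: D}| = #|A| by rewrite card_sig.
transitivity (\sum_(q : {ffun W -> ranking n})
    #|[set h : {ffun D -> W} | [forall x, ranks_first (q (h x)) (val (val x))]]|)%N.
  apply: eq_bigr => q _; rewrite big_sub -card_ffun_pointwise.
  by apply: eq_card => h; rewrite !inE; apply: eq_forallb => x; rewrite inE.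
rewrite sum_card_fibres.
rewrite (eq_bigr (fun h : {ffun D -> W} => if injectiveb h then
          ((n.-1)`! ^ #|A| * n`! ^ (#|{: W}| - #|A|))%N else 0%N)) => [|h _]; last first.
  by rewrite -card_D; apply: card_ffun_ranks_first => x y /val_inj/val_inj.
by rewrite -big_mkcond /= sum_nat_const -card_D -card_inj_ffuns cardsE.
Qed.

Lemma S_count_expansion :
  (S_count Gm Gw)%:R = \sum_(i < #|{: M}|.+1)
    (- (n.-1)`!%:R) ^+ i * n`!%:R ^+ (#|{: M}| - i) *
    (#|{: W}| ^_ i * ((n.-1)`! ^ i * n`! ^ (#|{: W}| - i)))%N%:R *+ 'C(#|{: M}|, i) :> int.
Proof.
have safeZ q m : #|safe_rankings q m|%:R =
    n`!%:R - (n.-1)`!%:R * #|admirers q m|%:R :> int.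
  by rewrite -(card_safe_rankings q m) mulnC natrD natrM addrK.
(* Named so that [sum_set_card] can be rewritten right to left. *)
pose term a : int := (- (n.-1)`!%:R) ^+ a * n`!%:R ^+ (#|{: M}| - a) *
  (#|{: W}| ^_ a * ((n.-1)`! ^ a * n`! ^ (#|{: W}| - a)))%N%:R.
rewrite -(sum_set_card _ term) /S_count card_set_pair natr_sum.
under eq_bigr do rewrite card_no_soulmates_given natr_prod
  (eq_bigr _ (fun m _ => safeZ _ m)) prod_subr_sets.
rewrite exchange_big /=; apply: eq_bigr => A _.
rewrite -big_distrr /=; under eq_bigr do rewrite -natr_prod.
by rewrite -natr_sum sum_prod_card_admirers.
Qed.

End Soulmates.

Theorem mainTheorem2 (n k : nat) (Gm Gw : {set 'I_n}) :
  (k <= n)%N -> #|Gm| = k -> #|Gw| = k ->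
  (S_count Gm Gw)%:Z =
  \sum_(i < (n - k).+1)
     (-1) ^+ i *
     ('C(n - k, i) ^ 2 * (n.-1)`! ^ (2 * i) * i`! * n`! ^ (2 * n - 2 * k - 2 * i))%N%:Z.
Proof.
move=> le_kn card_Gm card_Gw.
rewrite -natz S_count_expansion !card_outside card_Gm card_Gw.
apply: eq_bigr => i _; set N := (n - k)%N.
have -> : (2 * n - 2 * k - 2 * i = (N - i) + (N - i))%N by lia.
rewrite -bin_ffact mul2n -addnn !expnD -natz -mulr_natr !natrM !natrX.
rewrite -mulN1r exprMn.
ring.
Qed.
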